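(* Let $n,d$ be positive integers, let $\mathcal{C}\subseteq S_n$ be an $(n,d)$-permutation code under the block permutation metric, and let $\mathcal{F}=\{A(\pi):\pi\in\mathcal{C}\}$. Then $$|\mathcal{F}|\leqslant \frac{\binom{n}{d}\binom{n}{d}(n-d)!}{\binom{n-1}{n-d}}.$$
   Context: $S_n$ is the symmetric group on $[n]$, permutations written $\pi=(\pi(1),\dots,\pi(n))$. The characteristic set of $\pi$ is $A(\pi)=\{(\pi(i),\pi(i+1)):1\leqslant i<n\}$. The block permutation distance is $d_B(\pi_1,\pi_2)=|A(\pi_1)\setminus A(\pi_2)|$ (equivalently, $d_B(\pi_1,\pi_2)+1$ is the minimum number of consecutive segments into which $\pi_1$ must be cut so that $\pi_2$ is obtained by rearranging these segments). An $(n,d)$-permutation code is a subset $\mathcal{C}\subseteq S_n$ with $d_B(\pi,\sigma)\geqslant d$ for all distinct $\pi,\sigma\in\mathcal{C}$. *)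

From mathcomp Require Import all_boot all_order all_algebra.
From mathcomp Require Import fingroup perm.
Set Implicit Arguments. Unset Strict Implicit. Unset Printing Implicit Defensive.

(* Permutations of [n] are modelled as 'S_n = {perm 'I_n} (0-indexed). *)

Definition charset (n : nat) (p : 'S_n) : {set 'I_n * 'I_n} :=
  [set x | [exists i : 'I_n, exists j : 'I_n,
            (val j == (val i).+1) && (x == (p i, p j))]].

Definition dB (n : nat) (p q : 'S_n) : nat := #|charset p :\: charset q|.

Definition is_perm_code (n d : nat) (C : {set 'S_n}) : Prop :=
  forall p q : 'S_n, p \in C -> q \in C -> p != q -> d <= dB p q.

From mathcomp Require Import all_boot all_order all_algebra.
From mathcomp Require Import fingroup perm.
From mathcomp Require Import zify.
Import GRing.Theory Num.Theory.

Set Implicit Arguments.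
Unset Strict Implicit.
Unset Printing Implicit Defensive.

(* The characteristic set of a permutation of [n] has n - 1 pairs and is the
   graph of a partial injection of [n] into itself, a matching.  For distinct
   codewords p, q we have |A(p) :&: A(q)| = n - 1 - d_B(p, q) < n - d, so
   every (n - d)-subset of a member of F lies in no other member.  Counting
   these subsets gives |F| C(n-1, n-d) <= #{matchings with n - d pairs}
   = C(n, n-d) n!/d! = C(n, d)^2 (n - d)!. *)

Section Packing.

Variable T : finType.

Lemma leq_card_packing (F G : {set {set T}}) m k :
    {in F, forall A : {set T}, #|A| = m} ->
    {in F &, forall A B : {set T}, k <= #|A :&: B| -> A = B} ->
    {in F, forall A : {set T}, [set S : {set T} | S \subset A & #|S| == k] \subset G} ->
  #|F| * 'C(m, k) <= #|G|.
Proof.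
move=> cardF packF subG.
(* Double count the pairs (A, S) with S \in G a k-subset of A \in F. *)
pose draws (A : {set T}) := [set S : {set T} | S \subset A & #|S| == k].
have sum_draws A : A \in F -> \sum_(S in G) (S \in draws A) = 'C(m, k).
  move=> AF; rewrite -(cardF A AF) -cards_draws -sum1dep_card -big_mkcondr /=.
  apply: eq_bigl => S; rewrite inE andb_idl // => drawS.
  by apply: (subsetP (subG A AF)); rewrite inE.
have unique_member S : \sum_(A in F) (S \in draws A) <= 1.
  rewrite -big_mkcondr sum1dep_card /=; apply/card_le1_eqP => A B.
  rewrite !inE => /and3P[AF SA /eqP cardS] /and3P[BF SB _].
  by apply: packF => //; rewrite -cardS subset_leq_card // subsetI SA SB.
rewrite -sum_nat_const -sum1_card.
under eq_bigr => A AF do rewrite -(sum_draws A AF).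
by rewrite exchange_big; apply: leq_sum => S _; apply: unique_member.
Qed.

End Packing.

Section Matchings.

Variables T U : finType.

Definition matching (S : {set T * U}) := dinjectiveb fst S && dinjectiveb snd S.

Lemma matchingP (S : {set T * U}) :
  reflect ({in S &, injective fst} /\ {in S &, injective snd}) (matching S).
Proof.
by apply: (iffP andP) => -[inj1 inj2]; split; apply/dinjectiveP.
Qed.

Lemma matchingS (S A : {set T * U}) : S \subset A -> matching A -> matching S.
Proof.
move=> /subsetP sSA /matchingP[inj1 inj2]; apply/matchingP.
by split=> x y xS yS; [apply: inj1 | apply: inj2]; apply: sSA.
Qed.

Lemma leq_card_matchings (x0 : T) (y0 : U) k :
  #|[set S : {set T * U} | matching S & #|S| == k]| <= 'C(#|T|, k) * #|U| ^_ k.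
Proof.
pose graph (Xh : {set T} * {ffun 'I_k -> U}) :=
  [set (nth x0 (enum Xh.1) i, Xh.2 i) | i : 'I_k].
pose D := setX [set X : {set T} | #|X| == k] [set h : {ffun 'I_k -> U} | injectiveb h].
have -> : 'C(#|T|, k) * #|U| ^_ k = #|D|.
  by rewrite cardsX card_draws card_inj_ffuns card_ord.
apply: leq_trans (leq_imset_card graph D); apply: subset_leq_card.
apply/subsetP => S; rewrite inE => /andP[/matchingP[inj1 inj2] /eqP cardS].
pose X := fst @: S.
have cardX : #|X| = k by rewrite card_in_imset.
pose h := [ffun i : 'I_k => odflt y0 [pick y | (nth x0 (enum X) i, y) \in S]].
have graphS (i : 'I_k) : (nth x0 (enum X) i, h i) \in S.
  have : nth x0 (enum X) i \in X by rewrite -mem_enum mem_nth // -cardE cardX.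
  case/imsetP => s sS def_s; rewrite ffunE def_s.
  by case: pickP => [//|/(_ s.2)]; rewrite -surjective_pairing sS.
have inj_h : injective h.
  move=> i j /(inj2 _ _ (graphS i) (graphS j)) [/eqP].
  by rewrite nth_uniq ?enum_uniq -?cardE ?cardX // => /eqP/val_inj.
apply/imsetP; exists (X, h); first by rewrite !inE cardX eqxx; apply/injectiveP.
apply/eqP; rewrite eq_sym eqEcard; apply/andP; split.
  by apply/subsetP => _ /imsetP[i _ ->]; apply: graphS.
by rewrite card_imset ?card_ord ?cardS // => i j [_ /inj_h].
Qed.

End Matchings.

Section CharacteristicSet.

Variable n : nat.
Implicit Types p q : 'S_n.+1.

Lemma charsetE p :
  charset p = [set (p (widen_ord (leqnSn n) i), p (lift ord0 i)) | i : 'I_n].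
Proof.
apply/setP => x; rewrite inE; apply/existsP/imsetP => [[i]|[i _ ->]].
  case/existsP => j /andP[/eqP val_j /eqP ->].
  have lt_i_n : i < n by rewrite -ltnS -val_j ltn_ord.
  by exists (Ordinal lt_i_n) => //; congr (_, _); congr (p _); apply: val_inj.
by exists (widen_ord (leqnSn n) i); apply/existsP; exists (lift ord0 i); rewrite !eqxx.
Qed.

Lemma card_charset p : #|charset p| = n.
Proof.
rewrite charsetE card_imset ?card_ord // => i j [/perm_inj/(congr1 val) /= eq_ij _].
exact: val_inj eq_ij.
Qed.

Lemma charset_matching p : matching (charset p).
Proof.
rewrite charsetE; apply/matchingP; split=> _ _ /imsetP[i _ ->] /imsetP[j _ ->] /=.
  by move/perm_inj/(congr1 val) => /= /val_inj ->.
by move/perm_inj/lift_inj ->.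
Qed.

Lemma card_charsetI_add_dB p q : #|charset p :&: charset q| + dB p q = n.
Proof. by rewrite /dB cardsID card_charset. Qed.

End CharacteristicSet.

Theorem mainTheorem7 (n d : nat) (hn : 0 < n) (hd : 0 < d) (hdn : d <= n)
    (C : {set 'S_n}) :
  is_perm_code d C ->
  ((#|[set charset p | p in C]|%:R : rat)
    <= ('C(n, d) * 'C(n, d) * (n - d)`!)%:R / ('C(n.-1, n - d))%:R)%R.
Proof.
case: n hn hdn C => // m _ le_d_m1 C codeC /=.
set F := [set charset p | p in C]; set k := m.+1 - d.
have packF : #|F| * 'C(m, k) <= #|[set S : {set 'I_m.+1 * 'I_m.+1} | matching S & #|S| == k]|.
  apply: leq_card_packing => [_ /imsetP[p _ ->]|_ _ /imsetP[p pC ->] /imsetP[q qC ->] le_k|].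
  - exact: card_charset.
  - have [-> // | neq_pq] := eqVneq p q; have := codeC p q pC qC neq_pq.
    by have := card_charsetI_add_dB p q; rewrite /k in le_k; lia.
  - move=> _ /imsetP[p _ ->]; apply/subsetP => S; rewrite !inE => /andP[sub_S ->].
    by rewrite andbT (matchingS sub_S (charset_matching p)).
have := leq_trans packF (leq_card_matchings ord0 ord0 k).
rewrite card_ord -bin_ffact mulnA bin_sub // => le_F.
by rewrite ler_pdivlMr ?ltr0n ?bin_gt0 -?natrM ?ler_nat //; lia.
Qed.
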